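(* An orthogonal projection need not satisfy the property $\mathcal{AN}^*$: there exist a complex Hilbert space $H$ (e.g. $H = \ell^2$) and an orthogonal projection $P \in \mathcal{L}(H)$ that does not satisfy the property $\mathcal{AN}^*$.
   Context: $\mathcal{L}(H)$ is the space of bounded linear operators on $H$. For a closed subspace $M \neq \{0\}$ of $H$ and $T \in \mathcal{L}(H)$, write $[T|_M] := \inf\{\|Tx\| : x \in M, \|x\|=1\}$; $T|_M$ satisfies the property $\mathcal{N}^*$ if there exists $x_0 \in M$ with $\|x_0\| = 1$ and $\|Tx_0\| = [T|_M]$. $T$ satisfies the property $\mathcal{AN}^*$ if for every closed subspace $M \neq \{0\}$ of $H$, $T|_M$ satisfies $\mathcal{N}^*$. *)

From Stdlib Require Import Reals.
From Coquelicot Require Import Coquelicot.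
Open Scope R_scope.

Definition seqC := nat -> C.
Definition l2 (x : seqC) : Prop := ex_series (fun n => (Cmod (x n)) ^ 2).
Definition l2norm (x : seqC) : R := sqrt (Series (fun n => (Cmod (x n)) ^ 2)).
Definition l2inner (x y : seqC) : C :=
  (Series (fun n => Re (Cmult (x n) (Cconj (y n)))),
   Series (fun n => Im (Cmult (x n) (Cconj (y n))))).

Definition zeroS : seqC := fun _ => RtoC 0.
Definition addS (x y : seqC) : seqC := fun n => Cplus (x n) (y n).
Definition scalS (a : C) (x : seqC) : seqC := fun n => Cmult a (x n).
Definition subS (x y : seqC) : seqC := fun n => Cminus (x n) (y n).

Definition closed_subspace (M : seqC -> Prop) : Prop :=
  (forall x, M x -> l2 x) /\
  M zeroS /\
  (forall x y, M x -> M y -> M (addS x y)) /\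
  (forall a x, M x -> M (scalS a x)) /\
  (forall (u : nat -> seqC) (x : seqC), (forall k, M (u k)) -> l2 x ->
     is_lim_seq (fun k => l2norm (subS (u k) x)) 0 -> M x).

Definition nontrivial (M : seqC -> Prop) : Prop := exists x, M x /\ x <> zeroS.

(* bounded linear operators on H (values outside H are irrelevant) *)
Definition bounded_op (T : seqC -> seqC) : Prop :=
  (forall x, l2 x -> l2 (T x)) /\
  (forall x y, l2 x -> l2 y -> T (addS x y) = addS (T x) (T y)) /\
  (forall a x, l2 x -> T (scalS a x) = scalS a (T x)) /\
  (exists c, forall x, l2 x -> l2norm (T x) <= c * l2norm x).

Definition orth_proj (P : seqC -> seqC) : Prop :=
  bounded_op P /\
  (forall x, l2 x -> P (P x) = P x) /\
  (forall x y, l2 x -> l2 y -> l2inner (P x) y = l2inner x (P y)).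

Definition red_min (T : seqC -> seqC) (M : seqC -> Prop) : Rbar :=
  Glb_Rbar (fun r => exists x, M x /\ l2norm x = 1 /\ r = l2norm (T x)).

Definition N_star (T : seqC -> seqC) (M : seqC -> Prop) : Prop :=
  exists x0, M x0 /\ l2norm x0 = 1 /\ Finite (l2norm (T x0)) = red_min T M.

Definition AN_star (T : seqC -> seqC) : Prop :=
  forall M, closed_subspace M -> nontrivial M -> N_star T M.

From Stdlib Require Import Reals Arith Lra Lia Psatz FunctionalExtensionality.
From Coquelicot Require Import Coquelicot.
Open Scope R_scope.

(* Let P keep the even coordinates of a sequence and let M be the closed span of the
   unit vectors f_k = a_k e_(2k) + b_k e_(2k+1), i.e. the x with a_k x_(2k+1) = b_k x_(2k).
   Since |P f_k| = a_k tends to 0, the infimum [P|_M] is 0.  But a unit vector x of M with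
   P x = 0 has all even coordinates zero, hence (a_k > 0) all odd ones too, so x = 0:
   the infimum is not attained. *)

Definition single (i : nat) (r : R) : nat -> R :=
  fun n => if Nat.eq_dec n i then r else 0.

Lemma sum_n_single i r N : sum_n (single i r) N = if le_lt_dec i N then r else 0.
Proof.
  induction N as [|N IH].
  - rewrite sum_O; unfold single.
    destruct (Nat.eq_dec 0 i), (le_lt_dec i 0); try lia; reflexivity.
  - rewrite sum_Sn, IH; unfold single; change plus with Rplus.
    destruct (Nat.eq_dec (S N) i), (le_lt_dec i N), (le_lt_dec i (S N)); try lia; lra.
Qed.

Lemma is_series_single i r : is_series (single i r) r.
Proof.
  apply (filterlim_ext_loc (fun _ => r)); [|apply filterlim_const].
  exists i; intros n Hn; rewrite sum_n_single.
  destruct (le_lt_dec i n); [reflexivity|lia].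
Qed.

Lemma Series_ge_term (a : nat -> R) i :
  (forall n, 0 <= a n) -> ex_series a -> a i <= Series a.
Proof.
  intros Ha Hex.
  rewrite <- (is_series_unique _ _ (is_series_single i (a i))).
  apply Series_le; [|exact Hex].
  intros n; unfold single; destruct (Nat.eq_dec n i); subst; split; auto; lra.
Qed.

Lemma Cmod_sq_le (p q r : C) :
  Cmod p <= Cmod q + Cmod r -> Cmod p ^ 2 <= 2 * Cmod q ^ 2 + 2 * Cmod r ^ 2.
Proof.
  intros H; pose proof (Cmod_ge_0 p).
  pose proof (pow2_ge_0 (Cmod q - Cmod r)).
  assert (Cmod p ^ 2 <= (Cmod q + Cmod r) ^ 2) by (apply pow_incr; lra).
  lra.
Qed.

Lemma l2_dominated (x y z : seqC) :
  l2 y -> l2 z -> (forall n, Cmod (x n) <= Cmod (y n) + Cmod (z n)) -> l2 x.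
Proof.
  intros Hy Hz Hle.
  apply (@ex_series_le R_AbsRing R_CompleteNormedModule _
           (fun n => 2 * Cmod (y n) ^ 2 + 2 * Cmod (z n) ^ 2)).
  - intros n; change norm with (@abs R_AbsRing); simpl.
    rewrite Rabs_pos_eq by apply pow2_ge_0.
    apply Cmod_sq_le, Hle.
  - apply (ex_series_plus (fun n => 2 * Cmod (y n) ^ 2) (fun n => 2 * Cmod (z n) ^ 2));
      apply (ex_series_scal (V := R_NormedModule) 2 (fun n => _)); assumption.
Qed.

Lemma l2_zero : l2 zeroS.
Proof.
  exists 0; apply (is_series_ext (single 0 0)); [|apply is_series_single].
  intros n; unfold single, zeroS; rewrite Cmod_0.
  destruct (Nat.eq_dec n 0); simpl; ring.
Qed.

Lemma l2_add x y : l2 x -> l2 y -> l2 (addS x y).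
Proof. intros Hx Hy; apply (l2_dominated _ x y Hx Hy); intros n; apply Cmod_triangle. Qed.

Lemma l2_sub x y : l2 x -> l2 y -> l2 (subS x y).
Proof.
  intros Hx Hy; apply (l2_dominated _ x y Hx Hy); intros n; unfold subS, Cminus.
  rewrite <- (Cmod_opp (y n)); apply Cmod_triangle.
Qed.

Lemma l2_scal a x : l2 x -> l2 (scalS a x).
Proof.
  intros Hx.
  apply (ex_series_ext (fun n => scal (Cmod a ^ 2) (Cmod (x n) ^ 2))).
  - intros n; unfold scalS; rewrite Cmod_mult; change scal with Rmult; simpl; ring.
  - apply (ex_series_scal (V := R_NormedModule)); exact Hx.
Qed.

Lemma Cmod_le_l2norm (x : seqC) n : l2 x -> Cmod (x n) <= l2norm x.
Proof.
  intros Hx; unfold l2norm.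
  rewrite <- (sqrt_pow2 (Cmod (x n))) by apply Cmod_ge_0.
  apply sqrt_le_1_alt, (Series_ge_term (fun n => Cmod (x n) ^ 2)); [|exact Hx].
  intros; apply pow2_ge_0.
Qed.

Lemma l2norm_eq0 (x : seqC) : l2 x -> l2norm x = 0 -> forall n, x n = RtoC 0.
Proof.
  intros Hx H0 n; apply Cmod_eq_0.
  pose proof (Cmod_le_l2norm x n Hx); pose proof (Cmod_ge_0 (x n)); lra.
Qed.

Lemma l2norm_zero : l2norm zeroS = 0.
Proof.
  unfold l2norm; rewrite (Series_ext _ (single 0 0)).
  - rewrite (is_series_unique _ _ (is_series_single 0 0)); apply sqrt_0.
  - intros n; unfold zeroS, single; rewrite Cmod_0.
    destruct (Nat.eq_dec n 0); simpl; ring.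
Qed.

Lemma red_min_le (T : seqC -> seqC) (M : seqC -> Prop) x :
  M x -> l2norm x = 1 -> Rbar_le (red_min T M) (l2norm (T x)).
Proof. intros Mx Hx; apply Glb_Rbar_correct; exists x; auto. Qed.

Definition even_part (x : seqC) : seqC :=
  fun n => if Nat.even n then x n else RtoC 0.

Lemma even_part_sq_le x n : 0 <= Cmod (even_part x n) ^ 2 <= Cmod (x n) ^ 2.
Proof.
  split; [apply pow2_ge_0|]; unfold even_part.
  destruct (Nat.even n); [lra|].
  rewrite Cmod_0; simpl; rewrite Rmult_0_l; apply pow2_ge_0.
Qed.

Lemma l2_even_part x : l2 x -> l2 (even_part x).
Proof.
  intros Hx; apply (l2_dominated _ x x Hx Hx); intros n; unfold even_part.
  pose proof (Cmod_ge_0 (x n)).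
  destruct (Nat.even n); [lra|rewrite Cmod_0; lra].
Qed.

Lemma even_part_orth_proj : orth_proj even_part.
Proof.
  split; [split; [|split; [|split]]|split].
  - exact l2_even_part.
  - intros x y _ _; extensionality n; unfold even_part, addS.
    destruct (Nat.even n); [reflexivity|ring].
  - intros a x _; extensionality n; unfold even_part, scalS.
    destruct (Nat.even n); [reflexivity|ring].
  - exists 1; intros x Hx; rewrite Rmult_1_l; unfold l2norm.
    apply sqrt_le_1_alt, Series_le; [apply even_part_sq_le|exact Hx].
  - intros x _; extensionality n; unfold even_part.
    destruct (Nat.even n); reflexivity.
  - intros x y _ _; unfold l2inner; f_equal; apply Series_ext; intros n;
      unfold even_part; destruct (Nat.even n); simpl; ring.
Qed.

Section PairSpan.

Variables a b : nat -> R.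

Definition pair_span (x : seqC) : Prop :=
  l2 x /\ forall k, (RtoC (a k) * x (2 * k + 1)%nat = RtoC (b k) * x (2 * k)%nat)%C.

Lemma pair_span_limit (u : nat -> seqC) x k :
  (forall j, pair_span (u j)) -> l2 x ->
  is_lim_seq (fun j => l2norm (subS (u j) x)) 0 ->
  (RtoC (a k) * x (2 * k + 1)%nat = RtoC (b k) * x (2 * k)%nat)%C.
Proof.
  intros Hu Hx Hlim.
  set (d := (RtoC (a k) * x (2 * k + 1)%nat - RtoC (b k) * x (2 * k)%nat)%C).
  assert (Hd : forall j, Cmod d <= (Rabs (b k) + Rabs (a k)) * l2norm (subS (u j) x)).
  { intros j; destruct (Hu j) as [Huj Hrel].
    assert (Ed : d = (RtoC (b k) * subS (u j) x (2 * k)%nat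
                      - RtoC (a k) * subS (u j) x (2 * k + 1)%nat)%C).
    { unfold d, subS.
      transitivity (RtoC (b k) * (u j (2 * k)%nat - x (2 * k)%nat)
                    - RtoC (a k) * (u j (2 * k + 1)%nat - x (2 * k + 1)%nat)
                    + (RtoC (a k) * u j (2 * k + 1)%nat - RtoC (b k) * u j (2 * k)%nat))%C;
        [ring|rewrite Hrel; ring]. }
    assert (Hs : l2 (subS (u j) x)) by (apply l2_sub; assumption).
    pose proof (Cmod_le_l2norm _ (2 * k)%nat Hs) as H0.
    pose proof (Cmod_le_l2norm _ (2 * k + 1)%nat Hs) as H1.
    rewrite Ed; unfold Cminus.
    eapply Rle_trans; [apply Cmod_triangle|].
    rewrite Cmod_opp, !Cmod_mult, !Cmod_R.
    pose proof (Rabs_pos (a k)); pose proof (Rabs_pos (b k)).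
    pose proof (Cmod_ge_0 (subS (u j) x (2 * k)%nat));
      pose proof (Cmod_ge_0 (subS (u j) x (2 * k + 1)%nat)).
    nra. }
  assert (Hle := is_lim_seq_le (fun _ => Cmod d)
                   (fun j => (Rabs (b k) + Rabs (a k)) * l2norm (subS (u j) x))
                   (Cmod d) ((Rabs (b k) + Rabs (a k)) * 0) Hd (is_lim_seq_const _)
                   (is_lim_seq_scal_l _ _ _ Hlim)).
  simpl in Hle; rewrite Rmult_0_r in Hle.
  assert (Hd0 : d = RtoC 0) by (apply Cmod_eq_0; pose proof (Cmod_ge_0 d); lra).
  transitivity (d + RtoC (b k) * x (2 * k)%nat)%C; [unfold d; ring|].
  rewrite Hd0; ring.
Qed.

Lemma pair_span_closed : closed_subspace pair_span.
Proof.
  split; [|split; [|split; [|split]]].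
  - intros x [Hx _]; exact Hx.
  - split; [exact l2_zero|]; intros k; unfold zeroS; ring.
  - intros x y [Hx Ex] [Hy Ey]; split; [apply l2_add; assumption|].
    intros k; unfold addS; rewrite !Cmult_plus_distr_l, Ex, Ey; reflexivity.
  - intros c x [Hx Ex]; split; [apply l2_scal; assumption|].
    intros k; unfold scalS.
    rewrite Cmult_assoc, (Cmult_comm (RtoC (a k))), <- Cmult_assoc, Ex; ring.
  - intros u x Hu Hx Hlim; split; [exact Hx|].
    intros k; exact (pair_span_limit u x k Hu Hx Hlim).
Qed.

Definition pair_vec (k : nat) : seqC := fun n =>
  if Nat.eq_dec n (2 * k) then RtoC (a k)
  else if Nat.eq_dec n (2 * k + 1) then RtoC (b k) else RtoC 0.

Lemma is_series_pair_vec k :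
  is_series (fun n => Cmod (pair_vec k n) ^ 2) (a k ^ 2 + b k ^ 2).
Proof.
  apply (is_series_ext (fun n => plus (single (2 * k) (a k ^ 2) n)
                                      (single (2 * k + 1) (b k ^ 2) n))).
  - intros n; unfold single, pair_vec; change plus with Rplus.
    destruct (Nat.eq_dec n (2 * k)), (Nat.eq_dec n (2 * k + 1)); try lia;
      rewrite Cmod_R, pow2_abs; simpl; lra.
  - apply (is_series_plus (V := R_NormedModule)); apply is_series_single.
Qed.

Lemma l2norm_pair_vec k : l2norm (pair_vec k) = sqrt (a k ^ 2 + b k ^ 2).
Proof. unfold l2norm; rewrite (is_series_unique _ _ (is_series_pair_vec k)); reflexivity. Qed.

Lemma pair_vec_in_span k : pair_span (pair_vec k).
Proof.
  split; [eexists; apply is_series_pair_vec|].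
  intros k'; unfold pair_vec.
  destruct (Nat.eq_dec k' k) as [->|Hne].
  - destruct (Nat.eq_dec (2 * k + 1) (2 * k)); [lia|].
    destruct (Nat.eq_dec (2 * k + 1) (2 * k + 1)); [|lia].
    destruct (Nat.eq_dec (2 * k) (2 * k)); [|lia]; ring.
  - destruct (Nat.eq_dec (2 * k' + 1) (2 * k)); [lia|].
    destruct (Nat.eq_dec (2 * k' + 1) (2 * k + 1)); [lia|].
    destruct (Nat.eq_dec (2 * k') (2 * k)); [lia|].
    destruct (Nat.eq_dec (2 * k') (2 * k + 1)); [lia|]; ring.
Qed.

Lemma pair_span_nontrivial k : a k <> 0 -> nontrivial pair_span.
Proof.
  intros Hak; exists (pair_vec k); split; [apply pair_vec_in_span|].
  intros E; apply Hak.
  assert (E0 := f_equal (fun x => fst (x (2 * k)%nat)) E); unfold pair_vec, zeroS in E0.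
  destruct (Nat.eq_dec (2 * k) (2 * k)); [exact E0|lia].
Qed.

Lemma l2norm_even_part_pair_vec k : l2norm (even_part (pair_vec k)) = Rabs (a k).
Proof.
  unfold l2norm; rewrite (Series_ext _ (single (2 * k) (a k ^ 2))).
  - rewrite (is_series_unique _ _ (is_series_single _ _)), <- pow2_abs.
    apply sqrt_pow2, Rabs_pos.
  - intros n; unfold single, even_part, pair_vec.
    destruct (Nat.eq_dec n (2 * k)) as [->|].
    + rewrite Nat.even_mul; cbn -[pow Cmod]; rewrite Cmod_R, pow2_abs; reflexivity.
    + destruct (Nat.eq_dec n (2 * k + 1)) as [->|].
      * rewrite Nat.even_add, Nat.even_mul; cbn -[pow]; rewrite Cmod_0; ring.
      * destruct (Nat.even n); rewrite Cmod_0; ring.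
Qed.

Lemma pair_span_even_part_zero x :
  (forall k, a k <> 0) -> pair_span x ->
  (forall n, even_part x n = RtoC 0) -> x = zeroS.
Proof.
  intros Ha [_ Hrel] Hev.
  assert (Heven : forall k, x (2 * k)%nat = RtoC 0).
  { intros k; specialize (Hev (2 * k)%nat); unfold even_part in Hev.
    rewrite Nat.even_mul in Hev; exact Hev. }
  extensionality n; unfold zeroS.
  destruct (Nat.Even_or_Odd n) as [[k ->]|[k ->]]; [apply Heven|].
  specialize (Hrel k); rewrite Heven, Cmult_0_r in Hrel.
  apply (f_equal Cmod) in Hrel; rewrite Cmod_mult, Cmod_R, Cmod_0 in Hrel.
  apply Cmod_eq_0, (Rmult_eq_reg_l (Rabs (a k))); [lra|].
  apply Rabs_no_R0, Ha.
Qed.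

Lemma even_part_not_N_star :
  (forall k, 0 < a k) -> (forall k, a k ^ 2 + b k ^ 2 = 1) ->
  (forall eps, 0 < eps -> exists k, a k < eps) ->
  ~ N_star even_part pair_span.
Proof.
  intros Hpos Hunit Hsmall [x0 [Hx0 [Hn Hmin]]].
  assert (Hle : forall k, l2norm (even_part x0) <= a k).
  { intros k; pose proof (red_min_le even_part pair_span (pair_vec k)) as H.
    rewrite l2norm_pair_vec, Hunit, sqrt_1, l2norm_even_part_pair_vec,
      Rabs_pos_eq in H by (apply Rlt_le, Hpos).
    rewrite <- Hmin in H; apply H; [apply pair_vec_in_span|reflexivity]. }
  assert (Hz : l2norm (even_part x0) = 0).
  { apply Rle_antisym; [|apply sqrt_pos].
    apply Rnot_lt_le; intros Hp; destruct (Hsmall _ Hp) as [k Hk].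
    specialize (Hle k); lra. }
  assert (Hx0z : x0 = zeroS).
  { apply pair_span_even_part_zero; [|exact Hx0|].
    - intros k; pose proof (Hpos k); lra.
    - apply l2norm_eq0; [apply l2_even_part, Hx0|exact Hz]. }
  rewrite Hx0z, l2norm_zero in Hn; lra.
Qed.

End PairSpan.

(* (a_k, b_k) is the rational point of the unit circle with parameter m = k + 2, so f_k is
   a unit vector without any square root. *)

Definition pyth_m (k : nat) : R := INR k + 2.
Definition pyth_a (k : nat) : R := 2 * pyth_m k / (1 + pyth_m k ^ 2).
Definition pyth_b (k : nat) : R := (pyth_m k ^ 2 - 1) / (1 + pyth_m k ^ 2).

Lemma pyth_m_ge2 k : 2 <= pyth_m k.
Proof. unfold pyth_m; pose proof (pos_INR k); lra. Qed.

Lemma pyth_a_pos k : 0 < pyth_a k.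
Proof. unfold pyth_a; pose proof (pyth_m_ge2 k); apply Rdiv_lt_0_compat; nra. Qed.

Lemma pyth_unit k : pyth_a k ^ 2 + pyth_b k ^ 2 = 1.
Proof. unfold pyth_a, pyth_b; pose proof (pyth_m_ge2 k); field; nra. Qed.

Lemma pyth_a_small eps : 0 < eps -> exists k, pyth_a k < eps.
Proof.
  intros Heps; destruct (INR_unbounded (2 / eps)) as [k Hk]; exists k.
  pose proof (pyth_m_ge2 k).
  assert (Hm : 2 < pyth_m k * eps).
  { apply (Rmult_lt_compat_r eps) in Hk; [|exact Heps].
    unfold pyth_m, Rdiv in *; rewrite Rmult_assoc, Rinv_l in Hk by lra; lra. }
  unfold pyth_a; apply (Rmult_lt_reg_r (1 + pyth_m k ^ 2)); [nra|].
  unfold Rdiv; rewrite Rmult_assoc, Rinv_l by nra; nra.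
Qed.

Theorem lemma3p2 : exists P : seqC -> seqC, orth_proj P /\ ~ AN_star P.
Proof.
  exists even_part; split; [exact even_part_orth_proj|].
  intros HAN.
  apply (even_part_not_N_star pyth_a pyth_b pyth_a_pos pyth_unit pyth_a_small).
  apply HAN; [apply pair_span_closed|].
  apply (pair_span_nontrivial _ _ 0); pose proof (pyth_a_pos 0); lra.
Qed.
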